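(* Let $(A,\preccurlyeq)$ be a partially ordered set and let $U_\preccurlyeq(A)\subseteq 2^A$ be the set of up-sets of $A$, with the topology induced by the natural (product) topology on $2^A$. Then for $x\in U_\preccurlyeq(A)$ the following are equivalent: (i) $x$ is an isolated point of $U_\preccurlyeq(A)$, i.e., $x$ is not in the closure of $U_\preccurlyeq(A)-\{x\}$; (ii) $x$ is both the union of a finite (possibly empty) family of principal up-sets and the intersection of a finite (possibly empty) family of complements of principal down-sets.
   Context: An up-set is a subset $x\subseteq A$ with $a\in x$, $a\preccurlyeq b$ implying $b\in x$. The principal up-set determined by $a$ is ${\uparrow}(a)=\{b\mid b\succcurlyeq a\}$, the principal down-set is ${\downarrow}(a)=\{b\mid b\preccurlyeq a\}$; complements are taken in $A$. The natural topology on $2^A$ (the set of subsets of $A$) is the product topology of copies of the discrete space $\{0,1\}$; a subbasis is given by the sets $\{x\mid a\in x\}$ and $\{x\mid a\notin x\}$ for $a\in A$. The empty intersection is $A$ and the empty union is $\emptyset$. *)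

From HB Require Import structures.
From mathcomp Require Import all_boot all_order all_algebra.
From mathcomp Require Import all_classical all_reals all_analysis.
Set Implicit Arguments. Unset Strict Implicit. Unset Printing Implicit Defensive.
Import Order.TTheory.
Local Open Scope classical_set_scope.
Local Open Scope order_scope.

(* 2^A with the product topology of discrete {0,1} = bool : points are
   characteristic functions A -> bool, topology of pointwise convergence. *)
Definition powset_top (A : Type) := {ptws A -> bool}.

Definition is_upset {d : Order.disp_t} {A : porderType d} (x : A -> bool) : Prop :=
  forall a b : A, x a -> a <= b -> x b.

Definition upsets {d : Order.disp_t} (A : porderType d) : set (powset_top A) :=
  [set x | is_upset x].

Definition pup {d : Order.disp_t} {A : porderType d} (a : A) : A -> bool :=
  fun b => a <= b.
Definition pdown {d : Order.disp_t} {A : porderType d} (a : A) : A -> bool :=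
  fun b => b <= a.

Definition union_pups {d : Order.disp_t} {A : porderType d} (s : seq A) : A -> bool :=
  fun b => has (fun a => pup a b) s.

Definition inter_compl_pdowns {d : Order.disp_t} {A : porderType d} (s : seq A)
  : A -> bool :=
  fun b => all (fun a => ~~ pdown a b) s.
Arguments upsets {d} A.

(* An up-set x is isolated among up-sets iff it is determined, among all
   up-sets, by its values on a finite set s of points, because the basic
   neighbourhoods of x in 2^A are the sets of subsets agreeing with x on a
   finite set.  Given such an s, the up-set generated by the points of s in x
   and the largest up-set avoiding the points of s outside x both agree with
   x on s, hence equal x.  Conversely, if x is the up-set generated by s and
   the largest up-set avoiding t, any up-set agreeing with x on s ++ t
   contains s and avoids t, so it lies between x and x. *)
From HB Require Import structures.
From mathcomp Require Import all_boot all_order all_algebra.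
From mathcomp Require Import all_classical all_reals all_analysis.
Local Open Scope classical_set_scope.
Import Order.TTheory.

Lemma cvg_powset {T : Type} {F : set_system (powset_top T)} {x : powset_top T} :
  Filter F -> (forall a, F [set g | g a = x a]) -> F --> x.
Proof.
move=> FF Fx; apply/cvg_sup => a.
rewrite (@nbhsE (initial_topology (fun g : powset_top T => g a))) /=.
move=> B [_ [[C _ <-] Cx] CB]; rewrite nbhs_filterE.
by apply: filterS CB _; apply: filterS (Fx a) => g /= ->.
Qed.

Lemma nbhs_powsetE (T : eqType) (x : powset_top T) :
  nbhs x =
  filter_from [set: seq T] (fun s => [set g : powset_top T | {in s, g =1 x}]).
Proof.
have agree_filter : Filter
    (filter_from [set: seq T] (fun s => [set g : powset_top T | {in s, g =1 x}])).
  apply: filter_fromT_filter; first by exists [::].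
  move=> s s'; exists (s ++ s') => g gx.
  by split=> a a_in; apply: gx; rewrite mem_cat a_in ?orbT.
apply/seteqP; split.
  apply: (cvg_powset agree_filter) => a.
  by exists [:: a] => // g /(_ a (mem_head _ _)).
apply/filter_fromTP => s; elim: s => [|a s IHs].
  by apply: filterS filterT => g _ a.
have nbhs_a : nbhs x [set g : powset_top T | g a = x a].
  exact: (@proj_continuous T (fun=> bool) a x [set x a] (discrete_set1 _)).
apply: filterS (filterI nbhs_a IHs) => g [ga gs] b.
by rewrite inE => /predU1P[->|/gs].
Qed.

Lemma isolated_subspaceP (T : topologicalType) (U : set T) (x : T) : U x ->
  ~ @closure (subspace U) (U `\ x) x <->
  exists2 B, nbhs x B & B `&` U `<=` [set x].
Proof.
move=> Ux; split.
  move=> /existsNP[B /not_implyP[nbhsB /set0P/negP/negPn/eqP noB]].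
  have [V nbhsV BUE] := (@nbhs_subspace_ex T U B x Ux).1 nbhsB.
  exists V => // y; rewrite -BUE => -[By Uy].
  by apply: contrapT => yx; have : set0 y by rewrite -noB.
move=> [V nbhsV VU] clx.
have nbhsVU : nbhs (x : subspace U) (V `&` U).
  by apply/(@nbhs_subspace_ex T U _ x Ux); exists V => //; rewrite -setIA setIid.
have [y [[Uy yx] [Vy _]]] := clx _ nbhsVU.
exact/yx/VU.
Qed.

Section Upsets.
Context {d : Order.disp_t} {A : porderType d}.
Implicit Types (s t : seq A) (x y : A -> bool).

Lemma union_pups_upset s : is_upset (union_pups s).
Proof.
move=> a b /hasP[c cs ca] ab; apply/hasP; exists c => //.
exact: le_trans ca ab.
Qed.

Lemma inter_compl_pdowns_upset t : is_upset (inter_compl_pdowns t).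
Proof.
move=> a b /allP at_ ab; apply/allP => c ct; apply: contra (at_ c ct).
exact: le_trans ab.
Qed.

Lemma union_pups_mem s a : a \in s -> union_pups s a.
Proof. by move=> a_s; apply/hasP; exists a => //; exact: lexx. Qed.

Lemma inter_compl_pdowns_mem t a : a \in t -> ~~ inter_compl_pdowns t a.
Proof. by move=> a_t; apply/allPn; exists a; rewrite // negbK; exact: lexx. Qed.

Lemma union_pups_least {y s} :
  is_upset y -> all y s -> forall b, union_pups s b -> y b.
Proof. by move=> yU /allP ys b /hasP[a /ys ya ab]; exact: yU ya ab. Qed.

Lemma inter_compl_pdowns_greatest {y t} :
  is_upset y -> all (fun a => ~~ y a) t -> forall b, y b -> inter_compl_pdowns t b.
Proof.
move=> yU /allP yt b yb; apply/allP => a /yt; apply: contra => ba.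
exact: yU yb ba.
Qed.

Lemma union_pups_filter_agree x s :
  is_upset x -> {in s, union_pups [seq a <- s | x a] =1 x}.
Proof.
move=> xU a a_s; apply/idP/idP; last first.
  by move=> xa; apply: union_pups_mem; rewrite mem_filter xa.
by apply: union_pups_least => //; apply/allP => b; rewrite mem_filter => /andP[].
Qed.

Lemma inter_compl_pdowns_filter_agree x t :
  is_upset x -> {in t, inter_compl_pdowns [seq a <- t | ~~ x a] =1 x}.
Proof.
move=> xU a a_t; apply/idP/idP.
  by apply: contraLR => xa; apply: inter_compl_pdowns_mem; rewrite mem_filter xa.
apply: inter_compl_pdowns_greatest => //.
by apply/allP => b; rewrite mem_filter => /andP[].
Qed.

Lemma isolated_upsetP (x : powset_top A) : upsets A x ->
  ~ @closure (subspace (upsets A)) (upsets A `\ x) x <->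
  exists s, forall y, is_upset y -> {in s, y =1 x} -> y = x.
Proof.
move=> xU; rewrite isolated_subspaceP // nbhs_powsetE; split.
  move=> [B [s _ sB] BU]; exists s => y yU yx.
  exact: (BU y (conj (sB y yx) yU)).
move=> [s det]; exists [set g : powset_top A | {in s, g =1 x}]; first by exists s.
by move=> y [yx yU]; exact: det.
Qed.

End Upsets.

Theorem lemma5p1 (d : Order.disp_t) (A : porderType d) (x : powset_top A) :
  upsets A x ->
  ((~ @closure (subspace (upsets A)) (upsets A `\ x) x) <->
   ((exists s : seq A, x = union_pups s) /\
    (exists t : seq A, x = inter_compl_pdowns t))).
Proof.
move=> xU; rewrite isolated_upsetP //; split.
  move=> [s det]; split.
    exists [seq a <- s | x a]; apply/esym/det.
      exact: union_pups_upset.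
    exact: union_pups_filter_agree.
  exists [seq a <- s | ~~ x a]; apply/esym/det.
    exact: inter_compl_pdowns_upset.
  exact: inter_compl_pdowns_filter_agree.
move=> [[s xs] [t xt]]; exists (s ++ t) => y yU yx; apply/funext => b.
have y_s : all y s.
  by apply/allP => a a_s; rewrite yx ?mem_cat ?a_s // xs union_pups_mem.
have y_t : all (fun a => ~~ y a) t.
  apply/allP => a a_t; rewrite yx ?mem_cat ?a_t ?orbT // xt.
  exact: inter_compl_pdowns_mem.
apply/idP/idP => [yb | xb].
  by rewrite xt; exact: inter_compl_pdowns_greatest yU y_t _ yb.
by apply: union_pups_least yU y_s _ _; rewrite -xs.
Qed.
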